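(* Let $k\geq 1$ be an integer and let $D$ be a $k$-degenerate directed graph. Then $f(D)\leq \frac{k-1}{k+1}\,n(D)$.
   Context: Directed graphs are oriented graphs: finite, no loops, no multiple arcs and no pair of antiparallel arcs. $n(D)$ is the number of vertices and $f(D)$ is the minimum size of a set $F\subseteq V(D)$ such that $D-F$ contains no directed cycle. A directed graph is $k$-degenerate if its underlying undirected graph is $k$-degenerate, i.e. has an ordering of the vertices in which every vertex has at most $k$ neighbours preceding it. *)

From mathcomp Require Import all_boot all_order all_algebra.
From mathcomp Require Import boolp.
Set Implicit Arguments. Unset Strict Implicit. Unset Printing Implicit Defensive.

(* A directed graph on a finite vertex type T is given by its arc relation a:
   a x y means there is an arc x -> y.  A rel has no multiple arcs. *)

Definition oriented (T : finType) (a : rel T) : Prop :=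
  irreflexive a /\ (forall x y, a x y -> ~~ a y x).

Definition und_adj (T : finType) (a : rel T) : rel T :=
  fun x y => a x y || a y x.

Definition degenerate (T : finType) (a : rel T) (k : nat) : Prop :=
  exists ord : T -> nat, injective ord /\
    forall x, #|[set y | und_adj a x y & ord y < ord x]| <= k.

Definition directed_cycle (T : finType) (a : rel T) (c : seq T) : bool :=
  [&& c != [::], uniq c & cycle a c].

Definition fvs (T : finType) (a : rel T) (F : {set T}) : Prop :=
  forall c : seq T, directed_cycle a c -> ~~ all (fun v => v \notin F) c.

(* f(D): minimum size of a feedback vertex set ([set: T] is always one, so
   #|T| is a valid default). *)
Definition fvs_number (T : finType) (a : rel T) : nat :=
  \big[minn/#|T|]_(F : {set T} | `[< fvs a F >]) #|F|.

(* Induction on vertex sets U: the directed cycles inside U can be hit by a set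
   F with (k+1)|F| <= (k-1)|U|.  A cycle inside U through a vertex x meets both
   the in- and the out-neighbourhood of x in U, so if S is one of them, S plus
   a solution for U - x - S solves U; this fits the budget when 2|S| <= k-1.
   Otherwise every such half-neighbourhood has at least k/2 vertices.  Let w be
   the last vertex of the degeneracy order with a later neighbour u.  The
   vertices after w have all their neighbours before them, hence exactly k/2
   in- and k/2 out-neighbours.  Two deletions in a row, the first around u and
   the second around another later neighbour of w or around w itself, chosen
   so that the second half-neighbourhood loses a vertex to the first, remove
   2 + |S1| + |S2| vertices at cost |S1| + |S2| <= k-1, which again fits. *)

From mathcomp Require Import all_boot all_order all_algebra zify.
From mathcomp Require boolp.
Import Order.TTheory GRing.Theory Num.Theory.

Set Implicit Arguments.
Unset Strict Implicit.
Unset Printing Implicit Defensive.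

Definition fvs_in (T : finType) (a : rel T) (U F : {set T}) : Prop :=
  forall c, directed_cycle a c -> {subset c <= U} -> has (fun v => v \in F) c.

Definition half_nbhd (T : finType) (a : rel T) (U : {set T}) (x : T) (b : bool)
    : {set T} :=
  [set z in U | if b then a z x else a x z].

Definition strip (T : finType) (a : rel T) (U : {set T}) (x : T) (b : bool)
    : {set T} :=
  U :\: (x |: half_nbhd a U x b).

Definition small_fvs (T : finType) (a : rel T) (k : nat) (U : {set T}) : Prop :=
  exists2 F, fvs_in a U F & k.+1 * #|F| <= (k - 1) * #|U|.

Section HalfNeighbourhoods.

Variables (T : finType) (a : rel T).
Implicit Types (U F : {set T}) (x y z : T) (b : bool).

Lemma und_adjC x y : und_adj a x y = und_adj a y x.
Proof. exact: orbC. Qed.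

Lemma half_nbhd_sub U x b : half_nbhd a U x b \subset U.
Proof. by apply/subsetP => z; rewrite inE => /andP[]. Qed.

Lemma mem_half_nbhd_adj U x y b : y \in half_nbhd a U x b -> und_adj a x y.
Proof. by rewrite inE /und_adj; case: b => /andP[_ ->]; rewrite ?orbT. Qed.

Lemma adj_mem_half_nbhd U x y :
  y \in U -> und_adj a x y -> y \in half_nbhd a U x (a y x).
Proof. by rewrite inE => -> /orP[] ->; case: (a y x). Qed.

Lemma half_nbhd_swap U x y b : x \in U -> y \in U ->
  (y \in half_nbhd a U x b) = (x \in half_nbhd a U y (~~ b)).
Proof. by rewrite !inE => -> ->; case: b. Qed.

Lemma fvs_in_strip U F x b :
  fvs_in a (strip a U x b) F -> fvs_in a U (F :|: half_nbhd a U x b).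
Proof.
move=> FU c cyc_c cU.
have [|/hasPn c_half] := boolP (has (fun v => v \in half_nbhd a U x b) c).
  by apply: sub_has => v vS; rewrite in_setU vS orbT.
have x_notin_c : x \notin c.
  apply/negP => xc; case/and3P: cyc_c => _ _ cyc.
  have [z zc zx] : exists2 z, z \in c & (if b then a z x else a x z).
    by case: b {FU c_half}; [exists (prev c x); rewrite ?mem_prev ?prev_cycle
                         | exists (next c x); rewrite ?mem_next ?next_cycle].
  by move: (c_half z zc); rewrite inE cU // zx.
apply: sub_has (FU c cyc_c _) => [v vF|v vc]; first by rewrite in_setU vF.
rewrite in_setD in_setU1 negb_or c_half // cU // !andbT.
by apply: contraNneq x_notin_c => <-.
Qed.

Lemma card_half_nbhd_strip U x b y b' z :
  z \in x |: half_nbhd a U x b -> z \in half_nbhd a U y b' ->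
  #|half_nbhd a (strip a U x b) y b'| < #|half_nbhd a U y b'|.
Proof.
move=> zX zY; apply: proper_card; apply/properP; split.
  by apply/subsetP => v; rewrite !inE => /andP[/andP[_ ->] ->].
by exists z => //; rewrite inE in_setD zX.
Qed.

Hypothesis a_irr : irreflexive a.

Lemma card_strip U x b : x \in U ->
  #|U| = #|strip a U x b| + #|half_nbhd a U x b|.+1.
Proof.
move=> xU; have x_half : x \notin half_nbhd a U x b.
  by case: b; rewrite inE a_irr andbF.
have sub : x |: half_nbhd a U x b \subset U.
  by rewrite subUset sub1set xU half_nbhd_sub.
rewrite -(cardsID (x |: half_nbhd a U x b) U) (setIidPr sub) cardsU1 x_half.
by rewrite addnC.
Qed.

Lemma card_strip_lt U x b : x \in U -> #|strip a U x b| < #|U|.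
Proof. by move=> /(card_strip b) ->; rewrite addnS ltnS leq_addr. Qed.

Hypothesis a_asym : forall x y, a x y -> ~~ a y x.

Lemma half_nbhd_disjoint U x y b :
  y \in half_nbhd a U x b -> y \notin half_nbhd a U x (~~ b).
Proof.
by rewrite !inE; case: b => /andP[_ /a_asym/negbTE ->]; rewrite andbF.
Qed.

Lemma card_nbhd U x :
  #|[set z in U | und_adj a x z]| =
  #|half_nbhd a U x true| + #|half_nbhd a U x false|.
Proof.
have disj : [disjoint half_nbhd a U x true & half_nbhd a U x false].
  rewrite disjoints_subset; apply/subsetP => z /half_nbhd_disjoint.
  by rewrite in_setC.
rewrite -cardsUI (disjoint_setI0 disj) cards0 addn0; apply: eq_card => z.
by rewrite !inE -andb_orr /und_adj orbC.
Qed.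

End HalfNeighbourhoods.

Section SmallFvs.

Variables (T : finType) (a : rel T) (k : nat).
Implicit Types (U V S : {set T}) (x y z : T) (b : bool).

Lemma small_fvs0 : small_fvs a k set0.
Proof.
exists set0; last by rewrite cards0 muln0.
by move=> [|v c] // _ /(_ v (mem_head v c)); rewrite inE.
Qed.

Lemma small_fvs_extend U V S :
  (forall F, fvs_in a V F -> fvs_in a U (F :|: S)) ->
  k.+1 * #|S| + (k - 1) * #|V| <= (k - 1) * #|U| ->
  small_fvs a k V -> small_fvs a k U.
Proof.
move=> extend le_UV [F FV le_FV]; exists (F :|: S); first exact: extend.
apply: leq_trans (_ : k.+1 * (#|F| + #|S|) <= _).
  by rewrite leq_mul2l leq_card_setU orbT.
by rewrite mulnDr addnC; apply: leq_trans le_UV; rewrite leq_add2l.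
Qed.

Hypothesis a_irr : irreflexive a.

Lemma small_fvs_strip U x b : x \in U -> 2 * #|half_nbhd a U x b| <= k - 1 ->
  small_fvs a k (strip a U x b) -> small_fvs a k U.
Proof.
move=> xU light; apply: (small_fvs_extend (V := strip a U x b)) => [F|].
  exact: fvs_in_strip.
rewrite [#|U|](card_strip a_irr b xU); nia.
Qed.

Lemma small_fvs_strip2 U x b y b' z : x \in U -> y \in strip a U x b ->
  z \in x |: half_nbhd a U x b -> z \in half_nbhd a U y b' ->
  2 * #|half_nbhd a U x b| <= k -> 2 * #|half_nbhd a U y b'| <= k ->
  small_fvs a k (strip a (strip a U x b) y b') -> small_fvs a k U.
Proof.
move=> xU yU1 zX zY le_x le_y.
apply: (small_fvs_extend
  (S := half_nbhd a (strip a U x b) y b' :|: half_nbhd a U x b)) => [F|].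
  by move=> /fvs_in_strip /fvs_in_strip; rewrite setUA.
have shrink := card_half_nbhd_strip zX zY.
have le_S : #|half_nbhd a (strip a U x b) y b' :|: half_nbhd a U x b| <=
            #|half_nbhd a (strip a U x b) y b'| + #|half_nbhd a U x b|.
  by rewrite leq_card_setU.
rewrite [#|U|](card_strip a_irr b xU).
rewrite [#|strip a U x b|](card_strip a_irr b' yU1).
nia.
Qed.

End SmallFvs.

Section HeavyCase.

Variables (T : finType) (a : rel T) (k : nat) (ord : T -> nat) (U : {set T}).
Hypotheses (a_irr : irreflexive a) (a_asym : forall x y, a x y -> ~~ a y x).
Hypothesis ord_inj : injective ord.
Hypothesis back_deg : forall x, #|[set y | und_adj a x y & ord y < ord x]| <= k.
Hypothesis heavy : forall x b, x \in U -> k <= 2 * #|half_nbhd a U x b|.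
Hypothesis IH : forall V : {set T}, #|V| < #|U| -> small_fvs a k V.
Implicit Types (x y z w u : T) (b : bool).

Lemma adj_ord_neq x y : und_adj a x y -> ord x != ord y.
Proof. by apply: contraTneq => /ord_inj ->; rewrite /und_adj orbb a_irr. Qed.

Definition peak x := {in U, forall z, und_adj a x z -> ord z < ord x}.

Lemma half_nbhd_peak x b : x \in U -> peak x -> 2 * #|half_nbhd a U x b| = k.
Proof.
move=> xU px.
have deg : #|half_nbhd a U x true| + #|half_nbhd a U x false| <= k.
  rewrite -(card_nbhd a_asym); apply: leq_trans (back_deg x).
  apply: subset_leq_card; apply/subsetP => z.
  by rewrite !inE => /andP[zU xz]; rewrite xz px.
by have := heavy true xU; have := heavy false xU; case: b; lia.
Qed.

Lemma peak_nonadj x y :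
  x \in U -> y \in U -> peak x -> peak y -> ~~ und_adj a x y.
Proof.
move=> xU yU px py; apply/negP => xy.
by have := px y yU xy; have := py x xU; rewrite und_adjC => /(_ xy); lia.
Qed.

Lemma exists_last_forward_edge x0 z0 :
  x0 \in U -> z0 \in U -> und_adj a x0 z0 ->
  exists w u, [/\ w \in U, u \in U, und_adj a w u, ord w < ord u &
                  {in U, forall x, ord w < ord x -> peak x}].
Proof.
move=> x0U z0U adj0.
pose later_nbr w := [exists z in U, und_adj a w z && (ord w < ord z)].
have [w0 w0U w0_later] : exists2 w0, w0 \in U & later_nbr w0.
  case: (ltngtP (ord x0) (ord z0)) => [lt|lt|eq].
  - by exists x0 => //; apply/exists_inP; exists z0; rewrite ?adj0 ?lt.
  - exists z0 => //; apply/exists_inP; exists x0 => //.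
    by rewrite und_adjC adj0 lt.
  - by move: (adj_ord_neq adj0); rewrite eq eqxx.
have w0P : (w0 \in U) && later_nbr w0 by rewrite w0U.
case: (@arg_maxnP _ w0 (fun w => (w \in U) && later_nbr w) ord w0P).
move=> w /andP[wU /exists_inP[u uU /andP[wu lt_wu]]] w_max.
exists w, u; split=> // x xU lt_wx z zU xz; rewrite ltnNge; apply/negP => le_xz.
have lt_xz : ord x < ord z by rewrite ltn_neqAle le_xz adj_ord_neq.
suff : ord x <= ord w by rewrite leqNgt lt_wx.
by apply: w_max; rewrite xU; apply/exists_inP; exists z; rewrite ?xz.
Qed.

Lemma small_fvs_by_strip2 x b y b' z : x \in U -> y \in strip a U x b ->
  z \in x |: half_nbhd a U x b -> z \in half_nbhd a U y b' ->
  2 * #|half_nbhd a U x b| <= k -> 2 * #|half_nbhd a U y b'| <= k ->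
  small_fvs a k U.
Proof.
move=> xU yU1 zX zY le_x le_y.
apply: (small_fvs_strip2 a_irr xU yU1 zX zY) => //; apply: IH.
exact: ltn_trans (card_strip_lt a_irr b' yU1) (card_strip_lt a_irr b xU).
Qed.

Lemma small_fvs_two_peaks w u1 u2 : w \in U -> u1 \in U -> u2 \in U ->
  u1 != u2 -> peak u1 -> peak u2 -> und_adj a w u1 -> und_adj a w u2 ->
  small_fvs a k U.
Proof.
move=> wU u1U u2U u12 p1 p2 wu1 wu2.
rewrite und_adjC in wu1; rewrite und_adjC in wu2.
apply: (small_fvs_by_strip2 u1U _ (setU1r u1 (adj_mem_half_nbhd wU wu1))
                                    (adj_mem_half_nbhd wU wu2));
  try by rewrite half_nbhd_peak.
rewrite in_setD in_setU1 negb_or eq_sym u12 u2U andbT /=.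
by apply: contra (peak_nonadj u1U u2U p1 p2); apply: mem_half_nbhd_adj.
Qed.

Lemma small_fvs_one_peak w u : w \in U -> u \in U -> peak u -> und_adj a w u ->
  {in U, forall z, z != u -> und_adj a w z -> ord z < ord w} ->
  small_fvs a k U.
Proof.
move=> wU uU pu wu w_back.
have wu_neq : w != u by apply: contraTneq (adj_ord_neq wu) => ->; rewrite eqxx.
have [b uw] : exists b, u \in half_nbhd a U w b.
  by exists (a u w); exact: adj_mem_half_nbhd.
have wu' : w \in half_nbhd a U u (~~ b) by rewrite -half_nbhd_swap.
have deg_w : #|half_nbhd a U w b| + #|half_nbhd a U w (~~ b)| <= k.+1.
  suff : #|half_nbhd a U w true| + #|half_nbhd a U w false| <= k.+1.
    by case: (b); rewrite //= addnC.
  rewrite -(card_nbhd a_asym).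
  apply: leq_trans (_ : #|u |: [set y | und_adj a w y & ord y < ord w]| <= _).
    apply: subset_leq_card; apply/subsetP => z; rewrite !inE => /andP[zU wz].
    by case: eqVneq => //= zu; rewrite wz w_back.
  by rewrite cardsU1; have := back_deg w; case: (_ \notin _) => /=; lia.
have u_bal b2 : 2 * #|half_nbhd a U u b2| = k by apply: half_nbhd_peak.
case: (leqP (2 * #|half_nbhd a U w b|) k) => [le_wb | gt_wb].
  apply: (small_fvs_by_strip2 (b := b) uU _ (setU11 _ _) uw) => //; last first.
    by rewrite u_bal.
  rewrite in_setD in_setU1 negb_or wu_neq wU andbT /=.
  by move: (half_nbhd_disjoint a_asym wu'); rewrite negbK.
apply: (small_fvs_by_strip2 (b := ~~ b) wU _ (setU11 _ _) wu') => //;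
  last first.
- by rewrite u_bal.
- (* k is even since u is a peak, and w has at most k+1 neighbours *)
  by have := u_bal b; lia.
rewrite in_setD in_setU1 negb_or eq_sym wu_neq uU andbT /=.
exact: (half_nbhd_disjoint a_asym uw).
Qed.

Lemma small_fvs_heavy : 0 < k -> U != set0 -> small_fvs a k U.
Proof.
move=> k_pos /set0Pn[x0 x0U].
have /set0Pn[z0 z0x0] : half_nbhd a U x0 true != set0.
  by rewrite -card_gt0; have := heavy true x0U; lia.
have z0U := subsetP (half_nbhd_sub a U x0 true) z0 z0x0.
have [w [u [wU uU wu lt_wu above_w]]] :=
  exists_last_forward_edge x0U z0U (mem_half_nbhd_adj z0x0).
have pu := above_w u uU lt_wu.
case: (boolP [exists u2 in U, [&& u2 != u, und_adj a w u2 & ord w < ord u2]]).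
  case/exists_inP => u2 u2U /and3P[u2u wu2 lt_wu2].
  by apply: (small_fvs_two_peaks wU uU u2U _ pu (above_w u2 u2U lt_wu2) wu wu2);
    rewrite eq_sym.
move/exists_inPn => no_u2.
apply: (small_fvs_one_peak wU uU pu wu) => z zU zu wz.
rewrite ltn_neqAle eq_sym adj_ord_neq //= leqNgt.
by move: (no_u2 z zU); rewrite zu wz.
Qed.

End HeavyCase.

Lemma small_fvs_degenerate (T : finType) (a : rel T) k (ord : T -> nat) :
  oriented a -> 0 < k -> injective ord ->
  (forall x, #|[set y | und_adj a x y & ord y < ord x]| <= k) ->
  forall U, small_fvs a k U.
Proof.
move=> [a_irr a_asym] k_pos ord_inj back_deg U.
have [n] := ubnP #|U|; elim: n U => // n IHn U; rewrite ltnS => le_Un.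
have IH (V : {set T}) : #|V| < #|U| -> small_fvs a k V.
  by move=> lt_VU; apply: IHn; apply: leq_trans lt_VU le_Un.
have [->|U_n0] := eqVneq U set0; first exact: small_fvs0.
case: (boolP [exists x in U, exists b, 2 * #|half_nbhd a U x b| <= k - 1]).
  case/exists_inP => x xU /existsP[b light].
  exact: small_fvs_strip light (IH _ (card_strip_lt a_irr b xU)).
move/exists_inPn => light_none.
apply: (small_fvs_heavy a_irr a_asym ord_inj back_deg _ IH k_pos U_n0).
move=> x b xU.
by move: (light_none x xU); rewrite negb_exists => /forallP/(_ b); lia.
Qed.

Lemma fvs_number_le (T : finType) (a : rel T) (F : {set T}) :
  fvs_in a [set: T] F -> fvs_number a <= #|F|.
Proof.
move=> FT; rewrite /fvs_number -minEnat -leEnat.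
apply: bigmin_le_cond; apply: boolp.asboolT => c cyc_c.
apply: contraL (FT c cyc_c (fun v _ => in_setT v)) => /allP notF.
exact/hasPn.
Qed.

Lemma ler_nat_ratio (R : numFieldType) (f n k : nat) : 0 < k ->
  k.+1 * f <= (k - 1) * n ->
  (f%:R <= ((k%:R - 1) / (k%:R + 1)) * n%:R :> R)%R.
Proof.
move=> k_pos le_fn.
rewrite natr1 -[1%R]/(1%:R)%R -natrB // mulrAC ler_pdivlMr ?ltr0Sn //.
by rewrite -!natrM ler_nat mulnC.
Qed.

Theorem mainTheorem5 (T : finType) (a : rel T) (k : nat) :
  oriented a -> (1 <= k)%N -> degenerate a k ->
  ((fvs_number a)%:R <= ((k%:R - 1) / (k%:R + 1)) * (#|T|)%:R :> rat)%R.
Proof.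
move=> a_or k_pos [ord [ord_inj back_deg]].
have [F FT le_F] := small_fvs_degenerate a_or k_pos ord_inj back_deg [set: T].
rewrite cardsT in le_F.
apply: le_trans (ler_nat_ratio _ k_pos le_F).
by rewrite ler_nat fvs_number_le.
Qed.
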